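(* Let $X$ be an infinite set. Then the symmetric monoid $\mathrm{Map}(X)$ of all maps $X\to X$ (under composition) is not sofic.
   Context: For a non-empty finite set $Y$, $\mathrm{Map}(Y)$ is the monoid of all maps $Y\to Y$ under composition (identity $\mathrm{Id}_Y$) with the Hamming metric $d_Y(f,g)=|\{y\in Y : f(y)\ne g(y)\}|/|Y|$. For a monoid $M$ with identity $1_M$, finite $K\subset M$ and $\varepsilon,\alpha>0$, a map $\varphi\colon M\to\mathrm{Map}(Y)$ is a $(K,\varepsilon)$-morphism if $d_Y(\varphi(k_1k_2),\varphi(k_1)\varphi(k_2))\le\varepsilon$ for all $k_1,k_2\in K$ and $d_Y(\varphi(1_M),\mathrm{Id}_Y)\le\varepsilon$; it is $(K,\alpha)$-injective if $d_Y(\varphi(k_1),\varphi(k_2))\ge\alpha$ for all distinct $k_1,k_2\in K$. $M$ is sofic if for every finite $K\subset M$ and every $\varepsilon>0$ there exist a non-empty finite set $Y$ and a $(K,1-\varepsilon)$-injective $(K,\varepsilon)$-morphism $\varphi\colon M\to\mathrm{Map}(Y)$. *)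

From mathcomp Require Import all_boot all_order all_algebra.
From mathcomp Require Import Rstruct.
From Stdlib Require Import List Rdefinitions.
Set Implicit Arguments. Unset Strict Implicit. Unset Printing Implicit Defensive.
Import Order.TTheory GRing.Theory Num.Theory.
Local Open Scope ring_scope.

Definition hamming (Y : finType) (f g : Y -> Y) : R :=
  (#|[pred y | f y != g y]|)%:R / (#|Y|)%:R.

(* A monoid is given by a carrier M, a product [mul] and an identity [one].
   A finite subset K of M is represented by a list.  The product in Map(Y)
   is composition: (f g)(y) = f (g y). *)
Definition KEps_morphism (M : Type) (mul : M -> M -> M) (one : M)
  (Y : finType) (phi : M -> Y -> Y) (K : list M) (eps : R) : Prop :=
  (forall k1 k2, In k1 K -> In k2 K ->
     hamming (phi (mul k1 k2)) (fun y => phi k1 (phi k2 y)) <= eps) /\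
  hamming (phi one) (fun y => y) <= eps.

Definition KAlpha_injective (M : Type) (Y : finType) (phi : M -> Y -> Y)
  (K : list M) (alpha : R) : Prop :=
  forall k1 k2, In k1 K -> In k2 K -> k1 <> k2 -> alpha <= hamming (phi k1) (phi k2).

Definition sofic (M : Type) (mul : M -> M -> M) (one : M) : Prop :=
  forall (K : list M) (eps : R), 0 < eps ->
    exists (Y : finType) (phi : M -> Y -> Y),
      (0 < #|Y|)%nat /\
      KEps_morphism mul one phi K eps /\
      KAlpha_injective phi K (1 - eps).

Definition infinite_type (X : Type) : Prop :=
  ~ exists s : list X, forall x : X, In x s.

Definition map_mul (X : Type) (f g : X -> X) : X -> X := fun x => f (g x).
Definition map_one (X : Type) : X -> X := fun x => x.

(* A sofic monoid is directly finite: if [t s = 1] then [s t = 1].  Indeed, in a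
   finite set, a map [b] that is a left inverse of [a] on all but a fraction of the
   points is also a right inverse of [a] on all but that fraction, because [a] is
   injective on the points where [b (a y) = y].  So a sofic approximation [phi]
   with [phi(t) phi(s)] close to the identity also has [phi(s) phi(t)] close to
   the identity, whence [phi(s t)] is close to [phi(1)], and injectivity of [phi]
   forces [s t = 1].  For infinite [X], a shift along an injective sequence of [X]
   and its left inverse violate direct finiteness in Map(X). *)
From Stdlib Require Import Rdefinitions Classical ClassicalEpsilon FunctionalExtensionality List.
From Pilot Require Import Defs.
From mathcomp Require Import all_boot all_order all_algebra.
From mathcomp Require Import Rstruct.
From mathcomp Require Import lra.
Set Implicit Arguments. Unset Strict Implicit. Unset Printing Implicit Defensive.
Import Order.TTheory GRing.Theory Num.Theory.
Local Open Scope ring_scope.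

Section Hamming.
Variable Y : finType.
Implicit Types f g h a b : Y -> Y.

Lemma card_neq_triangle (T : eqType) (f g h : Y -> T) :
  (#|[pred y | f y != h y]| <= #|[pred y | f y != g y]| + #|[pred y | g y != h y]|)%N.
Proof.
rewrite -cardUI; apply: leq_trans (leq_addr _ _); apply: subset_leq_card.
by apply/subsetP => y; rewrite !inE; case: (eqVneq (f y) (g y)) => [->|].
Qed.

Lemma card_right_inverse_defect a b :
  (#|[pred y | a (b y) != y]| <= #|[pred y | b (a y) != y]|)%N.
Proof.
set G := [set y | b (a y) == y]; set F := [set y | a (b y) == y].
have GF : (#|G| <= #|F|)%N.
  rewrite -(@card_in_imset _ _ a G); last first.
    by move=> y1 y2; rewrite !inE => /eqP ba1 /eqP ba2 eq_a; rewrite -ba1 -ba2 eq_a.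
  apply/subset_leq_card/subsetP => z /imsetP [y]; rewrite !inE => /eqP bay ->.
  by rewrite bay.
have -> : #|[pred y | a (b y) != y]| = #|~: F| by apply: eq_card => y; rewrite !inE.
have -> : #|[pred y | b (a y) != y]| = #|~: G| by apply: eq_card => y; rewrite !inE.
by rewrite -(leq_add2l #|F|) cardsC -(cardsC G) leq_add2r.
Qed.

Lemma hamming_sym f g : hamming f g = hamming g f.
Proof. by rewrite /hamming; congr (_%:R / _); apply: eq_card => y; rewrite !inE eq_sym. Qed.

Lemma hamming_triangle f g h : hamming f h <= hamming f g + hamming g h.
Proof.
rewrite /hamming -mulrDl ler_wpM2r ?invr_ge0 ?ler0n //.
by rewrite -natrD ler_nat card_neq_triangle.
Qed.

Lemma hamming_comp_swap a b :
  hamming (fun y => a (b y)) id <= hamming (fun y => b (a y)) id.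
Proof.
by rewrite /hamming ler_wpM2r ?invr_ge0 ?ler0n // ler_nat card_right_inverse_defect.
Qed.

End Hamming.

Lemma sofic_directly_finite (M : Type) (mul : M -> M -> M) (one : M) :
  sofic mul one -> forall s t, mul t s = one -> mul s t = one.
Proof.
move=> soficM s t ts1; apply: NNPP => st1.
pose K := [:: s; t; one; mul s t].
have [sK tK oneK stK] : [/\ In s K, In t K, In one K & In (mul s t) K].
  by split; rewrite /K /=; do ?[by left | right].
have [|Y [phi [_ [[phi_mul phi_one] phi_inj]]]] := soficM K (1/10).
  by lra.
have far := phi_inj _ _ stK oneK st1.
(* [Defs] elaborates [1 - eps] with Stdlib's [Rminus] and [IZR 1]. *)
rewrite RminusE R1E in far.
have st_s_t := phi_mul _ _ sK tK.
have ts_t_s := phi_mul _ _ tK sK; rewrite ts1 in ts_t_s.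
have t_s_id : hamming (fun y => phi t (phi s y)) id <= 2/10.
  apply: le_trans (hamming_triangle _ (phi one) _) _.
  by rewrite hamming_sym; lra.
have s_t_id := le_trans (hamming_comp_swap (phi s) (phi t)) t_s_id.
have near : hamming (phi (mul s t)) (phi one) <= 4/10.
  apply: le_trans (hamming_triangle _ (fun y => phi s (phi t y)) _) _.
  apply: le_trans (lerD (lexx _) (hamming_triangle _ id _)) _.
  by rewrite [hamming id _]hamming_sym; lra.
by have := le_trans far near; lra.
Qed.

Section InfiniteType.
Variable X : Type.
Hypothesis X_infinite : infinite_type X.

Lemma exists_notin (l : list X) : exists x, ~ In x l.
Proof.
apply: NNPP => none; apply: X_infinite; exists l => x.
by apply: NNPP => x_notin; apply: none; exists x.
Qed.

Definition fresh (l : list X) : X :=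
  proj1_sig (constructive_indefinite_description _ (exists_notin l)).

Lemma freshP (l : list X) : ~ In (fresh l) l.
Proof. exact: proj2_sig (constructive_indefinite_description _ (exists_notin l)). Qed.

Fixpoint fresh_prefix (n : nat) : list X :=
  if n is n'.+1 then fresh (fresh_prefix n') :: fresh_prefix n' else nil.

Definition fresh_seq (n : nat) : X := fresh (fresh_prefix n).

Lemma fresh_seq_in_prefix m n : (m < n)%N -> In (fresh_seq m) (fresh_prefix n).
Proof.
elim: n => // n IH; rewrite ltnS leq_eqVlt => /orP [/eqP -> | lt_mn] /=.
  by left.
by right; apply: IH.
Qed.

Lemma fresh_seq_inj : injective fresh_seq.
Proof.
move=> m n eq_mn; case: (ltngtP m n) => // [lt_mn | lt_nm].
  case: (@freshP (fresh_prefix n)); rewrite -/(fresh_seq n) -eq_mn.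
  exact: fresh_seq_in_prefix.
case: (@freshP (fresh_prefix m)); rewrite -/(fresh_seq m) eq_mn.
exact: fresh_seq_in_prefix.
Qed.

Definition shift (x : X) : X :=
  match excluded_middle_informative (exists n, x = fresh_seq n) with
  | left in_seq => fresh_seq (proj1_sig (constructive_indefinite_description _ in_seq)).+1
  | right _ => x
  end.

Lemma shift_fresh_seq n : shift (fresh_seq n) = fresh_seq n.+1.
Proof.
rewrite /shift; case: excluded_middle_informative => [in_seq | []]; last by exists n.
by case: constructive_indefinite_description => m /= /fresh_seq_inj ->.
Qed.

Lemma shift_out x : ~ (exists n, x = fresh_seq n) -> shift x = x.
Proof. by rewrite /shift; case: excluded_middle_informative. Qed.

Lemma shift_inj : injective shift.
Proof.
have shiftE x : (exists n, x = fresh_seq n /\ shift x = fresh_seq n.+1) \/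
                (~ (exists n, x = fresh_seq n) /\ shift x = x).
  have [[n ->] | out] := classic (exists n, x = fresh_seq n).
    by left; exists n; rewrite shift_fresh_seq.
  by right; rewrite shift_out.
move=> x1 x2; case: (shiftE x1) => [[n1 [-> ->]] | [out1 ->]];
  case: (shiftE x2) => [[n2 [-> ->]] | [out2 ->]] //.
- by move/fresh_seq_inj => [->].
- by move=> eq2; case: out2; exists n1.+1.
- by move=> eq1; case: out1; exists n2.+1.
Qed.

Lemma shift_neq_fresh_seq0 x : shift x <> fresh_seq 0.
Proof.
have [[n ->] | out] := classic (exists n, x = fresh_seq n).
  by rewrite shift_fresh_seq => /fresh_seq_inj.
by rewrite shift_out // => eq0; apply: out; exists 0%N.
Qed.

End InfiniteType.

Lemma injective_left_inverse (A B : Type) (a0 : A) (f : A -> B) :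
  injective f -> exists g : B -> A, forall a, g (f a) = a.
Proof.
move=> f_inj.
exists (fun b => match excluded_middle_informative (exists a, f a = b) with
                 | left in_im => proj1_sig (constructive_indefinite_description _ in_im)
                 | right _ => a0
                 end) => a.
case: excluded_middle_informative => [in_im | []]; last by exists a.
by apply: f_inj; case: constructive_indefinite_description.
Qed.

Lemma map_not_directly_finite (X : Type) : infinite_type X ->
  exists s t : X -> X, map_mul t s = @map_one X /\ map_mul s t <> @map_one X.
Proof.
move=> X_infinite.
have [t ts1] := injective_left_inverse (fresh_seq X_infinite 0) (@shift_inj X X_infinite).
exists (shift X_infinite), t; split; first exact: functional_extensionality.
move=> /(congr1 (fun u => u (fresh_seq X_infinite 0))).
exact: shift_neq_fresh_seq0.
Qed.

Theorem corollary5p8 (X : Type) (hX : infinite_type X) :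
  ~ sofic (@map_mul X) (@map_one X).
Proof.
move=> soficX; have [s [t [ts1 st1]]] := map_not_directly_finite hX.
exact: st1 (sofic_directly_finite soficX ts1).
Qed.
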